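(* Let $\psi(x,y)=\binom{x}{y}$. For every $L\in\mathcal F_x(\psi)$ there is a unique difference operator $R(y,\delta_y)$ with $L\cdot\psi=R\cdot\psi$, and the resulting map $b_\psi:\mathcal F_x(\psi)\to\mathcal F_y(\psi)$, $b_\psi(L)=R$, is a well-defined bijective linear map satisfying $b_\psi(L_1L_2)=b_\psi(L_2)b_\psi(L_1)$ for all $L_1,L_2\in\mathcal F_x(\psi)$; i.e. $b_\psi$ is an algebra anti-isomorphism.
   Context: $\mathbb N=\{0,1,2,\dots\}$; functions on $\mathbb N$ are extended by $0$ to negative arguments. Shifts: $(\delta_x f)(x)=f(x+1)$, $(\delta_x^* f)(x)=f(x-1)$. A difference operator in $x$ is a finite expression $L=\sum_{k=0}^n a_k(x)\delta_x^k+\sum_{k=1}^n a_{-k}(x)(\delta_x^k)^*$ with $a_k:\mathbb N\to\mathbb R$, acting by $(L f)(x)=\sum_{k=-n}^n a_k(x)f(x+k)$; these form an algebra under composition; similarly in $y$. Operators in $x$ act on $\psi(x,y)$ for fixed $y$, operators in $y$ for fixed $x$. The left and right Fourier algebras are $\mathcal F_x(\psi)=\{L(x,\delta_x):\ L\cdot\psi=R\cdot\psi \text{ for some difference operator } R(y,\delta_y)\}$ and $\mathcal F_y(\psi)=\{R(y,\delta_y):\ L\cdot\psi=R\cdot\psi\text{ for some difference operator } L(x,\delta_x)\}$. *)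

From mathcomp Require Import all_boot all_order all_algebra.
From mathcomp Require Import reals.
Set Implicit Arguments. Unset Strict Implicit. Unset Printing Implicit Defensive.
Import Order.TTheory GRing.Theory Num.Theory.
Local Open Scope ring_scope.

Definition fext (R : realType) (f : nat -> R) (z : int) : R :=
  match z with Posz m => f m | Negz _ => 0 end.

Definition op (R : realType) := (nat -> R) -> (nat -> R).

(* T is a difference operator: T f (x) = sum_{k=-n}^{n} a_k(x) f(x+k)
   (with f extended by 0 to negative arguments).  Operators are identified
   with their action on functions N -> R. *)
Definition is_diffop (R : realType) (T : op R) : Prop :=
  exists (n : nat) (a : int -> nat -> R),
    forall (f : nat -> R) (x : nat),
      T f x = \sum_(i < (2 * n).+1) a (i%:Z - n%:Z) x * fext f (x%:Z + i%:Z - n%:Z).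

(* operators in x act on psi(x,y) for fixed y; operators in y for fixed x *)
Definition actx (R : realType) (T : op R) (psi : nat -> nat -> R) : nat -> nat -> R :=
  fun x y => T (fun x' => psi x' y) x.
Definition acty (R : realType) (S : op R) (psi : nat -> nat -> R) : nat -> nat -> R :=
  fun x y => S (psi x) y.

Definition Fx (R : realType) (psi : nat -> nat -> R) (L : op R) : Prop :=
  is_diffop L /\ exists S : op R, is_diffop S /\ actx L psi = acty S psi.
Definition Fy (R : realType) (psi : nat -> nat -> R) (S : op R) : Prop :=
  is_diffop S /\ exists L : op R, is_diffop L /\ actx L psi = acty S psi.

Definition op_add (R : realType) (T1 T2 : op R) : op R := fun f x => T1 f x + T2 f x.
Definition op_scale (R : realType) (c : R) (T : op R) : op R := fun f x => c * T f x.
Definition op_mul (R : realType) (T1 T2 : op R) : op R := fun f => T1 (T2 f).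

Definition binom_psi (R : realType) : nat -> nat -> R := fun x y => ('C(x, y))%:R.

(* Linearity plus locality make a difference operator T determined by its
   values on any family of functions that spans every initial segment
   [0, M] of N.  For psi(x,y) = binomial(x,y) both the rows and the columns
   of psi are such families (they are triangular), so the partner R of L is
   unique, and L is recovered from R.  Linearity of the map is immediate, and
   anti-multiplicativity holds because operators in x and operators in y
   commute: L1 L2 psi = L1 R2 psi = R2 L1 psi = R2 R1 psi. *)

From mathcomp Require Import all_boot all_order all_algebra.
From mathcomp Require Import reals.
From mathcomp Require Import zify.
From Stdlib Require Import FunctionalExtensionality ClassicalEpsilon.
Set Implicit Arguments. Unset Strict Implicit. Unset Printing Implicit Defensive.
Import Order.TTheory GRing.Theory Num.Theory.
Local Open Scope ring_scope.

Section LocalLinearOperators.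

Variable R : realType.
Implicit Types (T : op R) (f g : nat -> R).

Definition indicator (w : nat) : nat -> R := fun z => (z == w)%:R.

Definition local_linear T (n : nat) : Prop :=
  (forall f g x, (forall z, (x <= z + n)%N -> (z <= x + n)%N -> f z = g z) ->
     T f x = T g x) /\
  (forall (N : nat) (c : nat -> R) (h : nat -> nat -> R) x,
     T (fun z => \sum_(j < N) c j * h j z) x = \sum_(j < N) c j * T (h j) x).

Lemma local_linear_expand T n f x N (c : nat -> R) (h : nat -> nat -> R) :
  local_linear T n -> (forall z, (z <= x + n)%N -> f z = \sum_(j < N) c j * h j z) ->
  T f x = \sum_(j < N) c j * T (h j) x.
Proof. by move=> [loc lin] Hf; rewrite -lin; apply: loc => z _; apply: Hf. Qed.

Lemma local_linear0 T n x : local_linear T n -> T (fun _ => 0) x = 0.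
Proof.
by move=> [_ lin]; have := lin 0%N (fun _ => 0) (fun _ _ => 0) x; rewrite !big_ord0.
Qed.

Lemma sum_indicator M f z :
  (z < M)%N -> \sum_(j < M) f j * indicator j z = f z.
Proof.
move=> ltzM; rewrite (bigD1 (Ordinal ltzM)) //= /indicator eqxx mulr1.
rewrite big1 ?addr0 // => j neq_jz; case: eqP => [zj|_]; last by rewrite mulr0.
by move: neq_jz; rewrite -val_eqE /= zj eqxx.
Qed.

Lemma local_linear_indicator_far T n j x :
  local_linear T n -> (j + n < x)%N -> T (indicator j) x = 0.
Proof.
move=> hT far; rewrite -(local_linear0 x hT); case: hT => loc _.
by apply: loc => z h1 h2; rewrite /indicator; case: eqP => // zj; lia.
Qed.

Lemma local_linear_indicator_expand T n f x M :
  local_linear T n -> (x + n < M)%N ->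
  T f x = \sum_(j < M) f j * T (indicator j) x.
Proof.
by move=> hT ltM; apply: (local_linear_expand hT) => z hz; rewrite sum_indicator //; lia.
Qed.

Lemma fext_sum N (c : nat -> R) (h : nat -> nat -> R) w :
  fext (fun z => \sum_(j < N) c j * h j z) w = \sum_(j < N) c j * fext (h j) w.
Proof. by case: w => [m|m] //=; rewrite big1 // => j _; rewrite mulr0. Qed.

(* The terms with negative argument vanish since [fext] is 0 there. *)
Lemma window_sum_nat n x (Phi : nat -> R) :
  (forall j, (j + n < x)%N -> Phi j = 0) ->
  \sum_(i < (2 * n).+1) fext Phi (x%:Z + i%:Z - n%:Z) = \sum_(j < x + n + 1) Phi j.
Proof.
move=> Phi_far.
rewrite -(big_mkord xpredT (fun i : nat => fext Phi (x%:Z + i%:Z - n%:Z))).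
rewrite -(big_mkord xpredT Phi).
rewrite (@big_cat_nat _ _ _ (n - x)%N) //=; last by lia.
rewrite (@big_cat_nat _ _ _ (x - n)%N 0 (x + n + 1)%N) //=; last by lia.
rewrite [X in X + _]big_nat_cond [X in _ = X + _]big_nat_cond.
rewrite big1; last first.
  by move=> i /andP [/andP [_ hi] _]; case E: (x%:Z + i%:Z - n%:Z) => [m|m] //; lia.
rewrite [X in _ = X + _]big1; last by move=> i /andP [/andP [_ hi] _]; apply: Phi_far; lia.
rewrite !add0r -(add0n (n - x)%N) -(add0n (x - n)%N) !big_addn.
have -> : ((2 * n).+1 - (n - x) = x + n + 1 - (x - n))%N by lia.
apply: eq_big_nat => i _.
by have -> : x%:Z + (i + (n - x))%N%:Z - n%:Z = Posz (i + (x - n)) by lia.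
Qed.

Lemma diffop_local_linear T : is_diffop T -> exists n, local_linear T n.
Proof.
move=> [n [a Ta]]; exists n; split.
  move=> f g x fg; rewrite !Ta; apply: eq_bigr => i _; congr (_ * _).
  have := ltn_ord i; case E: (x%:Z + (nat_of_ord i)%:Z - n%:Z) => [m|m] //= ?.
  by apply: fg; lia.
move=> N c h x; rewrite Ta.
under eq_bigr => i _ do rewrite fext_sum mulr_sumr.
rewrite exchange_big /=; apply: eq_bigr => j _; rewrite Ta mulr_sumr.
by apply: eq_bigr => i _; rewrite mulrCA.
Qed.

Lemma local_linear_diffop T n : local_linear T n -> is_diffop T.
Proof.
move=> hT; exists n, (fun k x => fext (fun w => T (indicator w) x) (x%:Z + k)).
move=> f x; rewrite (@local_linear_indicator_expand _ _ f x (x + n + 1)%N hT); last by lia.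
rewrite -(@window_sum_nat n x (fun j => f j * T (indicator j) x)); last first.
  by move=> j far; rewrite (local_linear_indicator_far hT far) mulr0.
apply: eq_bigr => i _; rewrite addrA.
by case: (x%:Z + (nat_of_ord i)%:Z - n%:Z) => [m|m] /=; rewrite ?mulr0 // mulrC.
Qed.

Lemma local_linear_add T1 T2 n1 n2 :
  local_linear T1 n1 -> local_linear T2 n2 -> local_linear (op_add T1 T2) (maxn n1 n2).
Proof.
move=> [loc1 lin1] [loc2 lin2]; split.
  by move=> f g x fg; rewrite /op_add (loc1 f g) ?(loc2 f g) // => z ? ?; apply: fg; lia.
move=> N c h x; rewrite /op_add (lin1 N c h x) (lin2 N c h x) -big_split /=.
by apply: eq_bigr => j _; rewrite mulrDr.
Qed.

Lemma local_linear_scale (a : R) T n : local_linear T n -> local_linear (op_scale a T) n.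
Proof.
move=> [loc lin]; split; first by move=> f g x fg; rewrite /op_scale (loc f g x fg).
move=> N c h x; rewrite /op_scale (lin N c h x) mulr_sumr.
by apply: eq_bigr => j _; rewrite mulrCA.
Qed.

Lemma local_linear_mul T1 T2 n1 n2 :
  local_linear T1 n1 -> local_linear T2 n2 -> local_linear (op_mul T1 T2) (n1 + n2).
Proof.
move=> [loc1 lin1] [loc2 lin2]; split.
  move=> f g x fg; apply: loc1 => z ? ?; apply: loc2 => w ? ?; apply: fg; lia.
move=> N c h x; rewrite /op_mul.
have -> : T2 (fun z => \sum_(j < N) c j * h j z) = fun z => \sum_(j < N) c j * T2 (h j) z.
  by apply: functional_extensionality => z; rewrite (lin2 N c h z).
by rewrite (lin1 N c (fun j => T2 (h j)) x).
Qed.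

Lemma diffop_add T1 T2 : is_diffop T1 -> is_diffop T2 -> is_diffop (op_add T1 T2).
Proof.
move=> /diffop_local_linear [n1 h1] /diffop_local_linear [n2 h2].
exact: local_linear_diffop (local_linear_add h1 h2).
Qed.

Lemma diffop_scale (a : R) T : is_diffop T -> is_diffop (op_scale a T).
Proof.
move=> /diffop_local_linear [n h]; exact: local_linear_diffop (local_linear_scale a h).
Qed.

Lemma diffop_mul T1 T2 : is_diffop T1 -> is_diffop T2 -> is_diffop (op_mul T1 T2).
Proof.
move=> /diffop_local_linear [n1 h1] /diffop_local_linear [n2 h2].
exact: local_linear_diffop (local_linear_mul h1 h2).
Qed.

Definition locally_spanning (h : nat -> nat -> R) : Prop :=
  forall f (M : nat), exists N (c : nat -> R),
    forall z, (z <= M)%N -> f z = \sum_(j < N) c j * h j z.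

Lemma diffop_eq_spanning T1 T2 (h : nat -> nat -> R) :
  is_diffop T1 -> is_diffop T2 -> locally_spanning h ->
  (forall j, T1 (h j) = T2 (h j)) -> T1 = T2.
Proof.
move=> /diffop_local_linear [n1 h1] /diffop_local_linear [n2 h2] span eq_h.
apply: functional_extensionality => f; apply: functional_extensionality => x.
have [N [c fE]] := span f (x + maxn n1 n2)%N.
rewrite (local_linear_expand (N := N) (c := c) (h := h) h1);
  last by move=> z ?; apply: fE; lia.
rewrite (local_linear_expand (N := N) (c := c) (h := h) h2);
  last by move=> z ?; apply: fE; lia.
by apply: eq_bigr => j _; rewrite eq_h.
Qed.

(* Expand [S] over indicators of y, then push the finite sum through [L]. *)
Lemma diffop_commute L S (Phi : nat -> nat -> R) x y :
  is_diffop L -> is_diffop S ->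
  L (fun x' => S (Phi x') y) x = S (fun y' => L (fun x' => Phi x' y') x) y.
Proof.
move=> /diffop_local_linear [n1 hL] /diffop_local_linear [n2 hS].
have ltM : (y + n2 < y + n2 + 1)%N by lia.
rewrite (local_linear_indicator_expand _ hS ltM).
rewrite (local_linear_expand (N := (y + n2 + 1)%N) (c := fun j => S (indicator j) y)
           (h := fun j x' => Phi x' j) hL); last first.
  by move=> z _; rewrite (local_linear_indicator_expand _ hS ltM);
     apply: eq_bigr => j _; rewrite mulrC.
by apply: eq_bigr => j _; rewrite mulrC.
Qed.

Lemma locally_spanning_binom_top :
  locally_spanning (fun j z => ('C(z, j))%:R).
Proof.
move=> f M; exists M.+1; elim: M => [|M [c IH]].
  exists (fun _ => f 0%N) => z; rewrite leqn0 => /eqP ->.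
  by rewrite big_ord_recr big_ord0 /= bin0 mulr1 add0r.
pose e := f M.+1 - \sum_(j < M.+1) c j * ('C(M.+1, j))%:R.
exists (fun j => if j == M.+1 then e else c j) => z le_zM.
rewrite big_ord_recr /= eqxx.
under eq_bigr => j _ do rewrite (ltn_eqF (ltn_ord j)).
case: (ltngtP z M.+1) => [lt_zM|gt_zM|->]; first by rewrite bin_small // mulr0 addr0 -IH.
  by lia.
by rewrite binn mulr1 /e addrC subrK.
Qed.

(* Induct on M for every f at once: peel off C(M+1, .). *)
Lemma locally_spanning_binom_bottom :
  locally_spanning (fun j z => ('C(j, z))%:R).
Proof.
move=> f M; exists M.+1; elim: M f => [|M IH] f.
  exists (fun _ => f 0%N) => z; rewrite leqn0 => /eqP ->.
  by rewrite big_ord_recr big_ord0 /= bin0 mulr1 add0r.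
have [c fE] := IH (fun z => f z - f M.+1 * ('C(M.+1, z))%:R).
exists (fun j => if j == M.+1 then f M.+1 else c j) => z le_zM.
rewrite big_ord_recr /= eqxx.
under eq_bigr => j _ do rewrite (ltn_eqF (ltn_ord j)).
case: (ltngtP z M.+1) => [lt_zM|gt_zM|->]; first by rewrite -fE ?subrK.
  by lia.
rewrite binn mulr1 big1 ?add0r // => j _.
by rewrite bin_small ?mulr0 // ltnS.
Qed.

End LocalLinearOperators.

Section Intertwining.

Variables (R : realType) (psi : nat -> nat -> R).
Variables (L1 L2 S1 S2 : op R).
Hypotheses (E1 : actx L1 psi = acty S1 psi) (E2 : actx L2 psi = acty S2 psi).

Let pointwise (L S : op R) (E : actx L psi = acty S psi) x y :
  L (fun x' => psi x' y) x = S (psi x) y := congr1 (fun F => F x y) E.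

Lemma actx_add : actx (op_add L1 L2) psi = acty (op_add S1 S2) psi.
Proof.
apply: functional_extensionality => x; apply: functional_extensionality => y.
by rewrite /actx /acty /op_add (pointwise E1) (pointwise E2).
Qed.

Lemma actx_scale (a : R) : actx (op_scale a L1) psi = acty (op_scale a S1) psi.
Proof.
apply: functional_extensionality => x; apply: functional_extensionality => y.
by rewrite /actx /acty /op_scale (pointwise E1).
Qed.

Lemma actx_mul :
  is_diffop L1 -> is_diffop S2 -> actx (op_mul L1 L2) psi = acty (op_mul S2 S1) psi.
Proof.
move=> dL1 dS2.
apply: functional_extensionality => x; apply: functional_extensionality => y.
rewrite /actx /acty /op_mul.
have -> : L2 (fun x' => psi x' y) = fun x'' => S2 (psi x'') y.
  by apply: functional_extensionality => x''; exact: (pointwise E2 x'' y).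
rewrite (diffop_commute psi x y dL1 dS2); congr (S2 _ y).
by apply: functional_extensionality => y'; exact: (pointwise E1 x y').
Qed.

End Intertwining.

Section FourierMap.

Variables (R : realType) (psi : nat -> nat -> R).
Hypothesis acty_inj : forall S1 S2 : op R, is_diffop S1 -> is_diffop S2 ->
  acty S1 psi = acty S2 psi -> S1 = S2.
Hypothesis actx_inj : forall L1 L2 : op R, is_diffop L1 -> is_diffop L2 ->
  actx L1 psi = actx L2 psi -> L1 = L2.

(* Outside [Fx psi] the value is an arbitrary operator. *)
Definition fourier_map (L : op R) : op R :=
  epsilon (inhabits L) (fun S => is_diffop S /\ actx L psi = acty S psi).

Lemma fourier_mapP L :
  Fx psi L -> is_diffop (fourier_map L) /\ actx L psi = acty (fourier_map L) psi.
Proof. by move=> [_ ex]; exact: (epsilon_spec (inhabits L) _ ex). Qed.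

Lemma fourier_map_unique L S :
  Fx psi L -> is_diffop S -> actx L psi = acty S psi -> fourier_map L = S.
Proof.
move=> FL dS E; have [dbL EbL] := fourier_mapP FL.
by apply: acty_inj => //; rewrite -EbL.
Qed.

Lemma Fx_fourier_map L S :
  is_diffop L -> is_diffop S -> actx L psi = acty S psi ->
  Fx psi L /\ fourier_map L = S.
Proof.
move=> dL dS E; have FL : Fx psi L by split => //; exists S.
by split => //; apply: fourier_map_unique.
Qed.

Lemma Fy_fourier_map L : Fx psi L -> Fy psi (fourier_map L).
Proof.
by move=> FL; have [dbL EbL] := fourier_mapP FL; split => //; exists L; case: FL.
Qed.

Lemma fourier_map_inj L1 L2 :
  Fx psi L1 -> Fx psi L2 -> fourier_map L1 = fourier_map L2 -> L1 = L2.
Proof.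
move=> FL1 FL2 eqb; have [_ E1] := fourier_mapP FL1; have [_ E2] := fourier_mapP FL2.
by apply: actx_inj; [case: FL1 | case: FL2 | rewrite E1 E2 eqb].
Qed.

Lemma fourier_map_surj S : Fy psi S -> exists L, Fx psi L /\ fourier_map L = S.
Proof. by move=> [dS [L [dL E]]]; exists L; apply: Fx_fourier_map. Qed.

Lemma fourier_map_add L1 L2 : Fx psi L1 -> Fx psi L2 ->
  Fx psi (op_add L1 L2) /\
  fourier_map (op_add L1 L2) = op_add (fourier_map L1) (fourier_map L2).
Proof.
move=> FL1 FL2; have [d1 E1] := fourier_mapP FL1; have [d2 E2] := fourier_mapP FL2.
apply: Fx_fourier_map; [exact: diffop_add (proj1 FL1) (proj1 FL2)
  | exact: diffop_add | exact: actx_add].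
Qed.

Lemma fourier_map_scale (a : R) L : Fx psi L ->
  Fx psi (op_scale a L) /\ fourier_map (op_scale a L) = op_scale a (fourier_map L).
Proof.
move=> FL; have [d E] := fourier_mapP FL.
apply: Fx_fourier_map; [exact: diffop_scale (proj1 FL) | exact: diffop_scale
  | exact: actx_scale].
Qed.

Lemma fourier_map_mul L1 L2 : Fx psi L1 -> Fx psi L2 ->
  Fx psi (op_mul L1 L2) /\
  fourier_map (op_mul L1 L2) = op_mul (fourier_map L2) (fourier_map L1).
Proof.
move=> FL1 FL2; have [d1 E1] := fourier_mapP FL1; have [d2 E2] := fourier_mapP FL2.
apply: Fx_fourier_map; [exact: diffop_mul (proj1 FL1) (proj1 FL2)
  | exact: diffop_mul | exact: actx_mul (proj1 FL1) d2].
Qed.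

End FourierMap.

Lemma binom_acty_inj (R : realType) (S1 S2 : op R) :
  is_diffop S1 -> is_diffop S2 -> acty S1 (binom_psi R) = acty S2 (binom_psi R) ->
  S1 = S2.
Proof.
move=> d1 d2 E; apply: (diffop_eq_spanning d1 d2 (@locally_spanning_binom_bottom R)).
by move=> j; apply: functional_extensionality => y; apply: (congr1 (fun F => F j y) E).
Qed.

Lemma binom_actx_inj (R : realType) (L1 L2 : op R) :
  is_diffop L1 -> is_diffop L2 -> actx L1 (binom_psi R) = actx L2 (binom_psi R) ->
  L1 = L2.
Proof.
move=> d1 d2 E; apply: (diffop_eq_spanning d1 d2 (@locally_spanning_binom_top R)).
by move=> j; apply: functional_extensionality => x; apply: (congr1 (fun F => F x j) E).
Qed.

Theorem mainTheorem2 (R : realType) :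
  let psi := binom_psi R in
  (* uniqueness of R for every L in F_x(psi) *)
  (forall L : op R, Fx psi L ->
     exists! S : op R, is_diffop S /\ actx L psi = acty S psi) /\
  (* the map b_psi *)
  exists b : op R -> op R,
    (forall L, Fx psi L -> is_diffop (b L) /\ actx L psi = acty (b L) psi) /\
    (* bijection F_x(psi) -> F_y(psi) *)
    (forall L, Fx psi L -> Fy psi (b L)) /\
    (forall L1 L2, Fx psi L1 -> Fx psi L2 -> b L1 = b L2 -> L1 = L2) /\
    (forall S, Fy psi S -> exists L, Fx psi L /\ b L = S) /\
    (* linearity (F_x(psi) is closed under the operations) *)
    (forall L1 L2, Fx psi L1 -> Fx psi L2 ->
       Fx psi (op_add L1 L2) /\ b (op_add L1 L2) = op_add (b L1) (b L2)) /\
    (forall (c : R) L, Fx psi L ->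
       Fx psi (op_scale c L) /\ b (op_scale c L) = op_scale c (b L)) /\
    (* anti-multiplicativity *)
    (forall L1 L2, Fx psi L1 -> Fx psi L2 ->
       Fx psi (op_mul L1 L2) /\ b (op_mul L1 L2) = op_mul (b L2) (b L1)).
Proof.
move=> psi; have acty_inj := @binom_acty_inj R; have actx_inj := @binom_actx_inj R.
split.
  move=> L FL; exists (fourier_map psi L); split; first exact: fourier_mapP.
  by move=> S [dS E]; apply: fourier_map_unique.
exists (fourier_map psi).
split; first exact: fourier_mapP.
split; first exact: Fy_fourier_map.
split; first exact: fourier_map_inj.
split; first exact: fourier_map_surj.
split; first exact: fourier_map_add.
split; first exact: fourier_map_scale.
exact: fourier_map_mul.
Qed.
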